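(* For every $\epsilon>0$ there exists $k_0$ such that for every integer $k\ge k_0$ the following holds: if $N$ is a random variable with values in the positive integers, with $\mathrm E N<\infty$, whose distribution satisfies $\Pr(N=n)\le(3/8)^k|\mathcal Z|^{2n}$ for all positive integers $n$, then $H(N)/\mathrm E N\le\epsilon$. In particular, this holds for the stopping time $N$ of any zero-error variable-length $(k,N)$ network code for the network in the context with $k\ge k_0$.
   Context: $\mathcal Z$ is a fixed finite alphabet with $|\mathcal Z|\ge2$; $H(N)=-\sum_n\Pr(N=n)\log_2\Pr(N=n)$ is the Shannon entropy in bits. Network and codes: source nodes $s_1,s_2,s_3$, terminal $t$, edges $(s_3,s_1),(s_3,s_2),(s_1,t),(s_2,t)$; source $s_j$ observes $\mathbf X_j\in\{0,1\}^k$, all $3k$ bits i.i.d. uniform; $s_1,s_2$ also know $\mathbf X_3$. A variable-length $(k,N)$ network code consists of encoders $\phi_1,\phi_2:\{0,1\}^k\times\{0,1\}^k\to\mathcal Z^*$ producing sequences $\mathbf Z_1=\phi_1(\mathbf X_1,\mathbf X_3)$, $\mathbf Z_2=\phi_2(\mathbf X_2,\mathbf X_3)$, a positive-integer-valued stopping time $N$ for the sequence of pairs $(\mathbf Z_1(m),\mathbf Z_2(m))_{m\ge1}$, and a decoder producing $\hat{\boldsymbol\Sigma}=\psi(\mathbf Z_1^N,\mathbf Z_2^N)\in\{0,1,2,3\}^k$ with $\mathbf Z_j^N$ the first $N$ symbols of $\mathbf Z_j$. It is zero-error if $\Pr(\hat{\boldsymbol\Sigma}\ne\mathbf X_1+\mathbf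 X_2+\mathbf X_3)=0$ (componentwise integer sum). *)

From Stdlib Require Import Reals List Arith.
Import ListNotations.
Open Scope R_scope.

Definition log2 (x : R) : R := ln x / ln 2.
Definition plogp (x : R) : R := if Req_EM_T x 0 then 0 else x * log2 x.

(** A probability mass function [p] of a random variable N with values in the
    positive integers: p n = Pr(N = n), p 0 = 0, nonnegative, total mass 1. *)
Definition is_pmf_pos (p : nat -> R) : Prop :=
  p 0%nat = 0 /\ (forall n, 0 <= p n) /\ infinite_sum p 1.

(** E N = m  (in particular E N < infinity). *)
Definition mean_is (p : nat -> R) (m : R) : Prop :=
  infinite_sum (fun n => INR n * p n) m.

Definition entropy_is (p : nat -> R) (h : R) : Prop :=
  infinite_sum (fun n => - plogp (p n)) h.

Fixpoint bitvecs (k : nat) : list (list bool) :=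
  match k with
  | O => [[]]
  | S k' => flat_map (fun v => [false :: v; true :: v]) (bitvecs k')
  end.

Definition bitval (b : bool) : nat := if b then 1%nat else 0%nat.

Fixpoint sum3 (x1 x2 x3 : list bool) : list nat :=
  match x1, x2, x3 with
  | b1 :: r1, b2 :: r2, b3 :: r3 =>
      (bitval b1 + bitval b2 + bitval b3)%nat :: sum3 r1 r2 r3
  | _, _, _ => []
  end.

(** Source outcomes ((X1, X2), X3), uniformly distributed over {0,1}^(3k). *)
Definition sources (k : nat) : list (list bool * list bool * list bool) :=
  list_prod (list_prod (bitvecs k) (bitvecs k)) (bitvecs k).

(** A variable-length (k, N) network code over alphabet A:
    encoders phi1, phi2 : {0,1}^k x {0,1}^k -> A^*, a stopping rule giving N
    as a function of the pair of sequences (Z1, Z2), and a decoder psi. *)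
Record vl_code (A : Type) (k : nat) : Type := {
  phi1 : list bool -> list bool -> list A;
  phi2 : list bool -> list bool -> list A;
  stopN : list A -> list A -> nat;
  psi : list A -> list A -> list nat
}.
Arguments phi1 {A k}. Arguments phi2 {A k}.
Arguments stopN {A k}. Arguments psi {A k}.

Definition Z1 {A k} (c : vl_code A k) (x : list bool * list bool * list bool) : list A :=
  let '(x1, _, x3) := x in phi1 c x1 x3.
Definition Z2 {A k} (c : vl_code A k) (x : list bool * list bool * list bool) : list A :=
  let '(_, x2, x3) := x in phi2 c x2 x3.
Definition Nval {A k} (c : vl_code A k) (x : list bool * list bool * list bool) : nat :=
  stopN c (Z1 c x) (Z2 c x).

(** N is a positive-integer-valued stopping time for the sequence of pairs
    (Z1(m), Z2(m)): N >= 1, the first N symbols of Z1, Z2 exist, and whether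
    N = n is determined by the first n pairs (Z1(m), Z2(m)), m <= n. *)
Definition is_stopping_time {A k} (c : vl_code A k) : Prop :=
  (forall x, In x (sources k) ->
     (1 <= Nval c x)%nat /\ (Nval c x <= length (Z1 c x))%nat
     /\ (Nval c x <= length (Z2 c x))%nat)
  /\ (forall x x', In x (sources k) -> In x' (sources k) ->
       (Nval c x <= length (Z1 c x'))%nat ->
       (Nval c x <= length (Z2 c x'))%nat ->
       firstn (Nval c x) (Z1 c x') = firstn (Nval c x) (Z1 c x) ->
       firstn (Nval c x) (Z2 c x') = firstn (Nval c x) (Z2 c x) ->
       Nval c x' = Nval c x).

(** Zero-error: the decoder output psi(Z1^N, Z2^N) equals X1+X2+X3 for every
    source outcome (all outcomes have positive probability). *)
Definition zero_error {A k} (c : vl_code A k) : Prop :=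
  is_stopping_time c /\
  forall x, In x (sources k) ->
    let '(x1, x2, x3) := x in
    psi c (firstn (Nval c x) (Z1 c x)) (firstn (Nval c x) (Z2 c x)) = sum3 x1 x2 x3.

(** Distribution of the stopping time: Pr(N = n) under uniform sources. *)
Definition Npmf {A k} (c : vl_code A k) (n : nat) : R :=
  INR (length (filter (fun x => Nat.eqb (Nval c x) n) (sources k))) / 2 ^ (3 * k).

(** Termwise, [-x log2 x <= (t x + 2 e^(-t/2)) / ln 2]
    for every [t >= 0]; choosing [t = T n] and summing over [n] bounds [H(N)]
    by [(eps/2) E N] plus a constant [C] depending only on [eps].  On the
    other hand, [Pr(N = n) <= delta g(n)] with [delta] small puts at most half
    of the mass on [{1, ..., M}], whence [E N >= M/2 >= 2 C / eps].
    For a zero-error code, [Pr(N = n) <= |Z|^(2n) 2^k / 8^k = |Z|^(2n) / 4^k]: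
    on the event [N = n] the prefixes [Z1^n, Z2^n] together with [X3]
    determine the whole source outcome.  Indeed, if two outcomes [(x1,x2,x3)]
    and [(x1',x2',x3)] share these data, the crossed outcome [(x1,x2',x3)]
    feeds the first encoder as the first outcome and the second encoder as
    the second one, so it stops at time [n] and is decoded like both of them;
    since [x1 + x2 + x3] determines each summand given the other two, the
    outcomes coincide. *)

From Stdlib Require Import Reals List Arith Lra Lia FinFun.
Import ListNotations.
Open Scope R_scope.

(** * Series *)

Lemma Un_cv_const (c : R) : Un_cv (fun _ => c) c.
Proof.
  intros e He; exists 0%nat; intros n _.
  unfold Rdist; rewrite Rminus_diag, Rabs_R0; lra.
Qed.

Lemma Un_cv_le_const (u : nat -> R) (l c : R) :
  Un_cv u l -> (forall n, u n <= c) -> l <= c.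
Proof. intros Hu Hc; exact (Rle_cv_lim Hc Hu (Un_cv_const c)). Qed.

Lemma Rdiv_le_of_le_mult (a b c : R) : 0 < b -> a <= c * b -> a / b <= c.
Proof.
  intros Hb H; apply (Rmult_le_reg_r b); [lra|].
  unfold Rdiv; rewrite Rmult_assoc, Rinv_l, Rmult_1_r by lra; lra.
Qed.

Lemma sum_f_R0_growing (f : nat -> R) : (forall n, 0 <= f n) -> Un_growing (sum_f_R0 f).
Proof. intros Hf n; simpl; specialize (Hf (S n)); lra. Qed.

Lemma infinite_sum_finite_support (f : nat -> R) (K : nat) :
  (forall n, (K < n)%nat -> f n = 0) -> infinite_sum f (sum_f_R0 f K).
Proof.
  intros Hf e He; exists K; intros n Hn.
  assert (Hconst : sum_f_R0 f n = sum_f_R0 f K).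
  { induction Hn as [|n Hn IH]; [reflexivity|].
    simpl; rewrite IH, Hf by lia; ring. }
  unfold Rdist; rewrite Hconst, Rminus_diag, Rabs_R0; lra.
Qed.

Lemma sum_indicator (j K : nat) :
  sum_f_R0 (fun n => if Nat.eqb j n then 1 else 0) K = if Nat.leb j K then 1 else 0.
Proof.
  induction K as [|K IH]; simpl sum_f_R0.
  - destruct j; reflexivity.
  - rewrite IH; destruct (Nat.eqb_spec j (S K)), (Nat.leb_spec j K), (Nat.leb_spec j (S K));
      try lia; ring.
Qed.

Lemma sum_count_filter_eq {T : Type} (g : T -> nat) (L : list T) (K : nat) :
  (forall x, In x L -> (g x <= K)%nat) ->
  sum_f_R0 (fun n => INR (length (filter (fun x => Nat.eqb (g x) n) L))) K = INR (length L).
Proof.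
  induction L as [|x L IH]; intros HK.
  - simpl; apply sum_eq_R0; reflexivity.
  - rewrite (sum_eq _ (fun n => (if Nat.eqb (g x) n then 1 else 0)
                           + INR (length (filter (fun y => Nat.eqb (g y) n) L)))).
    + rewrite sum_plus, sum_indicator, IH by (intros; apply HK; simpl; auto).
      destruct (Nat.leb_spec (g x) K); [|specialize (HK x (or_introl eq_refl)); lia].
      simpl length; rewrite S_INR; ring.
    + intros n _; simpl; destruct (Nat.eqb (g x) n); simpl length; rewrite ?S_INR; ring.
Qed.

Lemma pmf_le_1 (p : nat -> R) : is_pmf_pos p -> forall n, p n <= 1.
Proof.
  intros [_ [Hpos Hsum]] n.
  apply Rle_trans with (sum_f_R0 p n); [|exact (sum_incr p n 1 Hsum Hpos)].
  destruct n as [|n]; simpl; [lra|].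
  pose proof (cond_pos_sum p n Hpos); lra.
Qed.

(** * The entropy is small compared with the mean *)

Lemma ln2_pos : 0 < ln 2.
Proof. pose proof ln_lt_2; lra. Qed.

Lemma exp_INR_mult (n : nat) (a : R) : exp (INR n * a) = exp a ^ n.
Proof.
  induction n as [|n IH]; [simpl; rewrite Rmult_0_l, exp_0; reflexivity|].
  rewrite S_INR; simpl pow; rewrite <- IH, <- exp_plus; f_equal; ring.
Qed.

Lemma ln_nonpos (x : R) : 0 < x <= 1 -> ln x <= 0.
Proof.
  intros [Hx0 Hx1]; destruct (Rle_lt_dec (ln x) 0) as [|Hpos]; [assumption|].
  apply exp_increasing in Hpos; rewrite exp_0, exp_ln in Hpos by lra; lra.
Qed.

Lemma neg_plogp_eq (x : R) : 0 < x -> - plogp x = x * - ln x / ln 2.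
Proof.
  intros Hx; pose proof ln2_pos.
  unfold plogp, log2; destruct (Req_EM_T x 0); [lra|]; field; lra.
Qed.

Lemma neg_plogp_nonneg (x : R) : 0 <= x <= 1 -> 0 <= - plogp x.
Proof.
  intros Hx; pose proof ln2_pos.
  destruct (Req_dec x 0) as [->|Hne].
  - unfold plogp; destruct (Req_EM_T 0 0); lra.
  - rewrite neg_plogp_eq by lra; pose proof (ln_nonpos x ltac:(lra)).
    apply Rle_mult_inv_pos; nra.
Qed.

Lemma mult_exp_neg_le (s : R) : 0 <= s -> s * exp (- s) <= 2 * exp (- s / 2).
Proof.
  intros Hs.
  assert (Hsq : exp (- s) = exp (- s / 2) * exp (- s / 2))
    by (rewrite <- exp_plus; f_equal; lra).
  assert (Hinv : exp (s / 2) * exp (- s / 2) = 1)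
    by (rewrite <- exp_plus, <- exp_0; f_equal; lra).
  pose proof (exp_ineq1_le (s / 2)); pose proof (exp_pos (- s / 2)).
  rewrite Hsq; nra.
Qed.

(* Where [-ln x <= t] the first term wins; otherwise [x = e^(-s)] with
   [s > t], and [s e^(-s) <= 2 e^(-s/2) <= 2 e^(-t/2)]. *)
Lemma neg_plogp_le (t x : R) :
  0 <= t -> 0 <= x <= 1 -> - plogp x <= (t * x + 2 * exp (- t / 2)) / ln 2.
Proof.
  intros Ht Hx; pose proof ln2_pos; pose proof (exp_pos (- t / 2)).
  destruct (Req_dec x 0) as [->|Hne].
  - unfold plogp; destruct (Req_EM_T 0 0) as [_|]; [|lra].
    rewrite Ropp_0; apply Rle_mult_inv_pos; lra.
  - rewrite neg_plogp_eq by lra.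
    apply Rmult_le_compat_r; [left; apply Rinv_0_lt_compat; lra|].
    set (s := - ln x).
    assert (Hs : 0 <= s) by (pose proof (ln_nonpos x ltac:(lra)); unfold s; lra).
    destruct (Rle_lt_dec s t) as [Hst|Hts]; [nra|].
    assert (Hxs : x = exp (- s)) by (unfold s; rewrite Ropp_involutive, exp_ln; lra).
    assert (exp (- s / 2) < exp (- t / 2)) by (apply exp_increasing; lra).
    pose proof (mult_exp_neg_le s Hs).
    rewrite Hxs at 1; nra.
Qed.

Lemma entropy_le_mean (p : nat -> R) (m T : R) :
  (forall n, 0 <= p n <= 1) -> mean_is p m -> 0 < T ->
  exists h, entropy_is p h /\
    h <= T / ln 2 * m + 2 / (ln 2 * (1 - exp (- T / 2))).
Proof.
  intros Hp Hm HT; pose proof ln2_pos.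
  set (r := exp (- T / 2)).
  assert (Hr : 0 < r < 1).
  { split; [apply exp_pos|]; unfold r; rewrite <- exp_0; apply exp_increasing; lra. }
  set (B := T / ln 2 * m + 2 / (ln 2 * (1 - r))).
  assert (Hterm : forall n,
      - plogp (p n) <= INR n * p n * (T / ln 2) + r ^ n * (2 / ln 2)).
  { intros n; pose proof (pos_INR n).
    eapply Rle_trans; [apply (neg_plogp_le (T * INR n)); [nra|apply Hp]|].
    replace (- (T * INR n) / 2) with (INR n * (- T / 2)) by field.
    rewrite exp_INR_mult; fold r; right; field; lra. }
  assert (Hpartial : forall N, sum_f_R0 (fun n => - plogp (p n)) N <= B).
  { intros N; eapply Rle_trans; [apply sum_Rle; intros n _; apply Hterm|].
    rewrite sum_plus, <- !scal_sum, tech3 by lra.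
    assert (Hmean : sum_f_R0 (fun n => INR n * p n) N <= m).
    { apply (sum_incr _ N m Hm); intros n; pose proof (pos_INR n); pose proof (Hp n); nra. }
    assert (Hgeom : (1 - r ^ S N) / (1 - r) <= / (1 - r)).
    { pose proof (pow_le r (S N) ltac:(lra)).
      unfold Rdiv; rewrite <- (Rmult_1_l (/ (1 - r))) at 2.
      apply Rmult_le_compat_r; [left; apply Rinv_0_lt_compat|]; lra. }
    assert (0 <= T / ln 2) by (apply Rle_mult_inv_pos; lra).
    assert (0 <= 2 / ln 2) by (apply Rle_mult_inv_pos; lra).
    assert (2 / ln 2 * / (1 - r) = 2 / (ln 2 * (1 - r))) by (field; lra).
    unfold B; nra. }
  destruct (growing_cv _ (sum_f_R0_growing _ (fun n => neg_plogp_nonneg _ (Hp n))))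
    as [h Hh].
  { exists B; intros x [N ->]; apply Hpartial. }
  exists h; split; [exact Hh|exact (Un_cv_le_const _ _ _ Hh Hpartial)].
Qed.

(** * The mean is large when the distribution is spread out *)

Lemma mean_ge_of_head_mass (p : nat -> R) (m : R) (M : nat) :
  (forall n, 0 <= p n) -> infinite_sum p 1 -> mean_is p m ->
  sum_f_R0 p M <= / 2 -> INR M / 2 <= m.
Proof.
  intros Hpos Hsum Hm Hhead; pose proof (pos_INR M).
  assert (Hmono : forall N, (N <= M)%nat -> sum_f_R0 p N <= sum_f_R0 p M)
    by (intros; apply (tech9 _ (sum_f_R0_growing p Hpos)); lia).
  assert (Hnn : forall n, 0 <= INR n * p n)
    by (intros n; pose proof (pos_INR n); pose proof (Hpos n); nra).
  assert (Htail : forall N,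
      INR M * (sum_f_R0 p N - sum_f_R0 p M) <= sum_f_R0 (fun n => INR n * p n) N).
  { induction N as [|N IH].
    - pose proof (Hmono 0%nat ltac:(lia)) as H0; simpl in H0 |- *; nra.
    - destruct (le_lt_dec (S N) M) as [HNM|HMN].
      + pose proof (Hmono _ HNM); pose proof (cond_pos_sum _ (S N) Hnn); nra.
      + assert (INR M <= INR (S N)) by (apply le_INR; lia).
        pose proof (Hpos (S N)); rewrite !tech5; cbv beta; nra. }
  assert (Hlim : Un_cv (fun N => INR M * (sum_f_R0 p N - sum_f_R0 p M))
                       (INR M * (1 - sum_f_R0 p M))).
  { apply CV_mult; [apply Un_cv_const|apply CV_minus; [exact Hsum|apply Un_cv_const]]. }
  pose proof (Rle_cv_lim Htail Hlim Hm); nra.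
Qed.

Lemma sum_le_of_pointwise_bound (p g : nat -> R) (delta : R) (M : nat) :
  0 <= delta -> (forall n, 0 <= g n) -> p 0%nat = 0 ->
  (forall n, (1 <= n)%nat -> p n <= delta * g n) ->
  sum_f_R0 p M <= delta * sum_f_R0 g M.
Proof.
  intros Hdelta Hg Hp0 Hb; rewrite scal_sum; apply sum_Rle; intros [|n] _.
  - rewrite Hp0; specialize (Hg 0%nat); nra.
  - rewrite Rmult_comm; apply Hb; lia.
Qed.

Theorem entropy_mean_ratio_small (g : nat -> R) (eps : R) :
  (forall n, 0 <= g n) -> 0 < eps ->
  exists delta, 0 < delta /\
    forall (p : nat -> R) (m : R), is_pmf_pos p -> mean_is p m ->
      (forall n, (1 <= n)%nat -> p n <= delta * g n) ->
      exists h, entropy_is p h /\ h / m <= eps.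
Proof.
  intros Hg Heps; pose proof ln2_pos.
  set (T := eps * ln 2 / 2).
  assert (HT : 0 < T) by (unfold T; nra).
  set (C := 2 / (ln 2 * (1 - exp (- T / 2)))).
  assert (HC : 0 < C).
  { assert (exp (- T / 2) < 1) by (rewrite <- exp_0; apply exp_increasing; lra).
    unfold C; apply Rdiv_lt_0_compat; nra. }
  destruct (INR_unbounded (4 * C / eps)) as [M HM].
  set (G := sum_f_R0 g M).
  assert (HG : 0 <= G) by (apply cond_pos_sum; exact Hg).
  exists (/ (2 * (G + 1))); split; [apply Rinv_0_lt_compat; lra|].
  intros p m Hpmf Hm Hb.
  pose proof Hpmf as [Hp0 [Hpos Hsum]].
  assert (Hhead : sum_f_R0 p M <= / 2).
  { eapply Rle_trans.
    - apply (sum_le_of_pointwise_bound p g (/ (2 * (G + 1)))); auto.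
      left; apply Rinv_0_lt_compat; lra.
    - fold G; replace (/ (2 * (G + 1)) * G) with (G / (2 * (G + 1))) by (unfold Rdiv; ring).
      apply Rdiv_le_of_le_mult; lra. }
  pose proof (mean_ge_of_head_mass p m M Hpos Hsum Hm Hhead) as HmM.
  assert (HCm : C <= eps * m / 2).
  { assert (4 * C / eps * eps = 4 * C) by (field; lra).
    nra. }
  destruct (entropy_le_mean p m T (fun n => conj (Hpos n) (pmf_le_1 p Hpmf n)) Hm HT)
    as [h [Hh HhB]].
  exists h; split; [exact Hh|].
  assert (T / ln 2 = eps / 2) by (unfold T; field; lra).
  fold C in HhB.
  apply Rdiv_le_of_le_mult; nra.
Qed.

(** * Words and source outcomes *)

Fixpoint words {X : Type} (xs : list X) (n : nat) : list (list X) :=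
  match n with
  | O => [[]]
  | S n' => flat_map (fun w => map (fun a => a :: w) xs) (words xs n')
  end.

Lemma words_S {X : Type} (xs : list X) (n : nat) :
  words xs (S n) = map (fun wa => snd wa :: fst wa) (list_prod (words xs n) xs).
Proof.
  cbn [words]; rewrite list_prod_as_flat_map.
  induction (words xs n) as [|w ws IH]; simpl; [reflexivity|].
  rewrite map_app, map_map, IH; reflexivity.
Qed.

Lemma length_words {X : Type} (xs : list X) (n : nat) :
  length (words xs n) = (length xs ^ n)%nat.
Proof.
  induction n as [|n IH]; [reflexivity|].
  rewrite words_S, length_map, length_prod, IH; simpl; lia.
Qed.

Lemma In_words {X : Type} (xs : list X) (n : nat) (w : list X) :
  (forall a, In a xs) -> In w (words xs n) <-> length w = n.
Proof.
  intros Hfull; revert w; induction n as [|n IH]; intros w.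
  - destruct w; simpl; split; intuition discriminate.
  - rewrite words_S, in_map_iff; split.
    + intros [[v a] [<- Hva]]; apply in_prod_iff in Hva as [Hv _].
      simpl; f_equal; apply IH, Hv.
    + destruct w as [|a w]; [discriminate|]; intros Hlen.
      exists (w, a); split; [reflexivity|].
      apply in_prod_iff; split; [apply IH; simpl in Hlen; lia|apply Hfull].
Qed.

Lemma NoDup_list_prod {X Y : Type} (l : list X) (l' : list Y) :
  NoDup l -> NoDup l' -> NoDup (list_prod l l').
Proof.
  intros Hl Hl'; induction Hl as [|x l Hx Hl IH]; simpl; [constructor|].
  apply NoDup_app; auto.
  - apply Injective_map_NoDup; auto; intros a b E; injection E; auto.
  - intros [a b] Hab; apply in_map_iff in Hab as [y [E _]]; injection E as <- <-.
    rewrite in_prod_iff; tauto.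
Qed.

Lemma NoDup_words {X : Type} (xs : list X) (n : nat) :
  NoDup xs -> NoDup (words xs n).
Proof.
  intros Hxs; induction n as [|n IH]; [repeat constructor; simpl; tauto|].
  rewrite words_S; apply Injective_map_NoDup; [|apply NoDup_list_prod; auto].
  intros [v a] [v' a'] E; injection E as -> ->; reflexivity.
Qed.

Lemma bitvecs_words (k : nat) : bitvecs k = words [false; true] k.
Proof. induction k as [|k IH]; cbn [bitvecs words]; rewrite ?IH; reflexivity. Qed.

Lemma bool_in_full (b : bool) : In b [false; true].
Proof. destruct b; simpl; tauto. Qed.

Lemma In_sources (k : nat) (x1 x2 x3 : list bool) :
  In (x1, x2, x3) (sources k) <-> length x1 = k /\ length x2 = k /\ length x3 = k.
Proof.
  unfold sources; rewrite !in_prod_iff, !bitvecs_words, !(In_words _ _ _ bool_in_full).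
  tauto.
Qed.

Lemma NoDup_sources (k : nat) : NoDup (sources k).
Proof.
  unfold sources; rewrite bitvecs_words.
  repeat apply NoDup_list_prod; apply NoDup_words; repeat constructor; simpl; intuition discriminate.
Qed.

Lemma length_sources (k : nat) : length (sources k) = (2 ^ (3 * k))%nat.
Proof.
  unfold sources; rewrite !length_prod, bitvecs_words, length_words.
  replace (3 * k)%nat with (k + k + k)%nat by lia; rewrite !Nat.pow_add_r; reflexivity.
Qed.

Lemma sum3_comm12 (x1 x2 x3 : list bool) : sum3 x1 x2 x3 = sum3 x2 x1 x3.
Proof.
  revert x2 x3; induction x1 as [|b1 x1 IH]; intros [|b2 x2] [|b3 x3]; simpl; auto.
  rewrite IH; f_equal; lia.
Qed.

Lemma sum3_inj_l (k : nat) (x1 x1' x2 x3 : list bool) :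
  length x1 = k -> length x1' = k -> length x2 = k -> length x3 = k ->
  sum3 x1 x2 x3 = sum3 x1' x2 x3 -> x1 = x1'.
Proof.
  revert k x1' x2 x3; induction x1 as [|b1 x1 IH];
    intros k [|b1' x1'] [|b2 x2] [|b3 x3] L1 L1' L2 L3 E; simpl in *; subst; try lia; auto.
  injection E as Eb E; f_equal; [destruct b1, b1'; simpl in Eb; lia|].
  apply (IH (length x1) x1' x2 x3); auto; lia.
Qed.

(** * The stopping time of a zero-error code *)

Section ZeroErrorCode.

Variables (A : Type) (k : nat) (c : vl_code A k).
Hypothesis Hc : zero_error c.

Lemma zero_error_prefix_inj (n : nat) (x1 x2 x3 x1' x2' : list bool) :
  In (x1, x2, x3) (sources k) -> In (x1', x2', x3) (sources k) ->
  Nval c (x1, x2, x3) = n -> Nval c (x1', x2', x3) = n ->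
  firstn n (Z1 c (x1, x2, x3)) = firstn n (Z1 c (x1', x2', x3)) ->
  firstn n (Z2 c (x1, x2, x3)) = firstn n (Z2 c (x1', x2', x3)) ->
  x1 = x1' /\ x2 = x2'.
Proof.
  destruct Hc as [[Hstop Hdet] Hdec].
  intros Hx Hx' Nx Nx' F1 F2.
  pose proof Hx as [L1 [L2 L3]]%In_sources; pose proof Hx' as [L1' [L2' _]]%In_sources.
  assert (Hy : In (x1, x2', x3) (sources k)) by (apply In_sources; auto).
  destruct (Hstop _ Hx) as [_ [Lz1 Lz2]]; destruct (Hstop _ Hx') as [_ [_ Lz2']].
  assert (Ny : Nval c (x1, x2', x3) = n).
  { rewrite <- Nx; apply Hdet; cbn [Z1 Z2] in *; auto; [lia|congruence]. }
  pose proof (Hdec _ Hy) as Dy; pose proof (Hdec _ Hx) as Dx; pose proof (Hdec _ Hx') as Dx'.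
  cbn [Z1 Z2] in *; rewrite Nx in Dx; rewrite Ny, <- F2, Dx in Dy.
  assert (E2 : x2 = x2').
  { rewrite (sum3_comm12 x1 x2), (sum3_comm12 x1 x2') in Dy.
    exact (sum3_inj_l k x2 x2' x1 x3 L2 L2' L1 L3 Dy). }
  subst x2'; split; [|reflexivity].
  rewrite Nx', <- F1, Dx in Dx'.
  exact (sum3_inj_l k x1 x1' x2 x3 L1 L1' L2 L3 Dx').
Qed.

Lemma count_stop_le (zs : list A) (n : nat) : (forall a, In a zs) ->
  (length (filter (fun x => Nat.eqb (Nval c x) n) (sources k))
     <= length zs ^ n * length zs ^ n * 2 ^ k)%nat.
Proof.
  intros Hfull.
  set (F := filter (fun x => Nat.eqb (Nval c x) n) (sources k)).
  set (f := fun x => (firstn n (Z1 c x), firstn n (Z2 c x), snd x)).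
  replace (2 ^ k)%nat with (length (words [false; true] k)) by apply length_words.
  rewrite <- (length_words zs n), <- !length_prod, <- (length_map f F).
  apply NoDup_incl_length.
  - apply NoDup_map_NoDup_ForallPairs; [|apply NoDup_filter, NoDup_sources].
    intros [[x1 x2] x3] [[x1' x2'] x3'] Hx Hx' E.
    apply filter_In in Hx as [Hx Nx], Hx' as [Hx' Nx']; apply Nat.eqb_eq in Nx, Nx'.
    injection E as F1 F2 E3; subst x3'.
    destruct (zero_error_prefix_inj n x1 x2 x3 x1' x2') as [-> ->]; auto.
  - intros y Hy; apply in_map_iff in Hy as [[[x1 x2] x3] [<- Hx]].
    apply filter_In in Hx as [Hx Nx]; apply Nat.eqb_eq in Nx.
    destruct Hc as [[Hstop _] _]; destruct (Hstop _ Hx) as [_ [Lz1 Lz2]].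
    apply In_sources in Hx as [_ [_ L3]].
    apply in_prod_iff; split; [apply in_prod_iff; split|];
      rewrite In_words by (auto using bool_in_full);
      [apply firstn_length_le; lia|apply firstn_length_le; lia|exact L3].
Qed.

Lemma Npmf_eq_0 (n : nat) : (forall x, In x (sources k) -> Nval c x <> n) -> Npmf c n = 0.
Proof.
  intros Hn; unfold Npmf.
  rewrite (filter_ext_in _ (fun _ => false)), filter_false; [simpl; lra|].
  intros x Hx; apply Nat.eqb_neq, Hn, Hx.
Qed.

Lemma Npmf_le (zs : list A) (n : nat) : (forall a, In a zs) ->
  Npmf c n <= (/ 4) ^ k * INR (length zs) ^ (2 * n).
Proof.
  intros Hfull; set (q := INR (length zs)).
  pose proof (le_INR _ _ (count_stop_le zs n Hfull)) as Hcount.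
  rewrite !mult_INR, !pow_INR in Hcount; fold q in Hcount.
  assert (Hpow : (/ 4) ^ k * 2 ^ (3 * k) = 2 ^ k).
  { rewrite pow_mult, <- Rpow_mult_distr; f_equal; field. }
  pose proof (pow_lt 2 (3 * k) ltac:(lra)).
  unfold Npmf; apply Rdiv_le_of_le_mult; [assumption|].
  replace (2 * n)%nat with (n + n)%nat by lia; rewrite pow_add.
  replace (INR 2) with 2 in Hcount by reflexivity.
  replace ((/ 4) ^ k * (q ^ n * q ^ n) * 2 ^ (3 * k)) with (q ^ n * q ^ n * 2 ^ k)
    by (rewrite <- Hpow; ring).
  exact Hcount.
Qed.

Definition max_stop : nat := list_max (map (Nval c) (sources k)).

Lemma Nval_le_max_stop (x : list bool * list bool * list bool) :
  In x (sources k) -> (Nval c x <= max_stop)%nat.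
Proof.
  intros Hx; unfold max_stop.
  pose proof (proj1 (list_max_le (map (Nval c) (sources k)) _) (le_n _)) as Hall.
  rewrite Forall_forall in Hall; apply Hall, in_map, Hx.
Qed.

Lemma Npmf_has_mean : exists m, mean_is (Npmf c) m.
Proof.
  eexists; apply (infinite_sum_finite_support _ max_stop); intros n Hn.
  rewrite Npmf_eq_0; [ring|].
  intros x Hx; pose proof (Nval_le_max_stop x Hx); lia.
Qed.

Lemma Npmf_is_pmf_pos : is_pmf_pos (Npmf c).
Proof.
  pose proof (pow_lt 2 (3 * k) ltac:(lra)).
  split; [|split].
  - apply Npmf_eq_0; intros x Hx; destruct Hc as [[Hstop _] _].
    destruct (Hstop x Hx); lia.
  - intros n; unfold Npmf; apply Rle_mult_inv_pos; [apply pos_INR|assumption].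
  - replace 1 with (sum_f_R0 (Npmf c) max_stop).
    + apply infinite_sum_finite_support; intros n Hn; apply Npmf_eq_0.
      intros x Hx; pose proof (Nval_le_max_stop x Hx); lia.
    + unfold Npmf; rewrite <- (Rmult_1_r (sum_f_R0 _ _)); unfold Rdiv.
      rewrite <- scal_sum, Rmult_comm, sum_count_filter_eq by apply Nval_le_max_stop.
      rewrite length_sources, pow_INR; replace (INR 2) with 2 by reflexivity.
      field; lra.
Qed.

End ZeroErrorCode.

Theorem lemma1 (A : Type) (zl : list A) (Hnd : NoDup zl)
    (Hfull : forall a : A, In a zl) (H2 : (2 <= length zl)%nat) :
  forall eps : R, 0 < eps ->
  exists k0 : nat, forall k : nat, (k0 <= k)%nat ->
    (forall (p : nat -> R) (m : R),
        is_pmf_pos p -> mean_is p m ->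
        (forall n : nat, (1 <= n)%nat -> p n <= (3 / 8) ^ k * INR (length zl) ^ (2 * n)) ->
        exists h : R, entropy_is p h /\ h / m <= eps)
    /\
    (forall c : vl_code A k, zero_error c ->
        exists m h : R, mean_is (Npmf c) m /\ entropy_is (Npmf c) h /\ h / m <= eps).
Proof.
  intros eps Heps; set (q := INR (length zl)).
  destruct (entropy_mean_ratio_small (fun n => q ^ (2 * n)) eps) as [delta [Hdelta Hratio]];
    [intros n; apply pow_le, pos_INR|exact Heps|].
  destruct (pow_lt_1_zero (3 / 8) ltac:(rewrite Rabs_right; lra) delta Hdelta) as [k0 Hk0].
  exists k0; intros k Hk.
  assert (Hsmall : forall a, 0 <= a <= (3 / 8) ^ k -> forall n, a * q ^ (2 * n) <= delta * q ^ (2 * n)).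
  { intros a Ha n; specialize (Hk0 k Hk); rewrite Rabs_right in Hk0 by (apply Rle_ge, pow_le; lra).
    apply Rmult_le_compat_r; [apply pow_le, pos_INR|lra]. }
  split.
  - intros p m Hp Hm Hb; apply (Hratio p m Hp Hm); intros n Hn.
    eapply Rle_trans; [apply Hb, Hn|apply Hsmall; split; [apply pow_le|right]; lra].
  - intros c Hc; destruct (Npmf_has_mean A k c) as [m Hm].
    destruct (Hratio (Npmf c) m (Npmf_is_pmf_pos A k c Hc) Hm) as [h [Hh Hhm]].
    + intros n _; eapply Rle_trans; [apply (Npmf_le A k c Hc zl n Hfull)|].
      apply Hsmall; split; [apply pow_le; lra|apply pow_incr; lra].
    + exists m, h; auto.
Qed.
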